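(* Let $n\le -1$ be an odd integer. Then $q_n$ has no monic quadratic factor $f\in\mathbb{Z}[w]$ with $f\equiv (w+1)^2\pmod 2$.
   Context: Define $q_n\in\mathbb{Z}[w]$ for odd $n\le -1$ by $q_{-1}=w^3-w^2+2w-7$, $q_{-3}=w^5-2w^4-2w^3+5w^2+3w-9$, $q_{-5}=w^7-2w^6-4w^5+8w^4+4w^3-7w^2+2w-7$, and $q_n=(w^2-1)(q_{n+2}-q_{n+4})+q_{n+6}$ for odd $n<-5$. *)

From HB Require Import structures.
From mathcomp Require Import all_boot all_order all_algebra.
Set Implicit Arguments. Unset Strict Implicit. Unset Printing Implicit Defensive.
Import Order.TTheory GRing.Theory Num.Theory.
Local Open Scope ring_scope.

Definition q_m1 : {poly int} := 'X^3 - 'X^2 + 2%:P * 'X - 7%:P.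
Definition q_m3 : {poly int} :=
  'X^5 - 2%:P * 'X^4 - 2%:P * 'X^3 + 5%:P * 'X^2 + 3%:P * 'X - 9%:P.
Definition q_m5 : {poly int} :=
  'X^7 - 2%:P * 'X^6 - 4%:P * 'X^5 + 8%:P * 'X^4 + 4%:P * 'X^3
  - 7%:P * 'X^2 + 2%:P * 'X - 7%:P.

(* qtrip k = (Q k, Q (k+1), Q (k+2)) where Q k = q_{-(2k+1)}.
   Recurrence: Q (k+3) = (w^2-1)(Q(k+2) - Q(k+1)) + Q k,
   i.e. q_n = (w^2-1)(q_{n+2} - q_{n+4}) + q_{n+6} with n = -(2k+7). *)
Fixpoint qtrip (k : nat) : {poly int} * {poly int} * {poly int} :=
  match k with
  | 0%N => (q_m1, q_m3, q_m5)
  | k'.+1 =>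
      let: (a, b, c) := qtrip k' in
      (b, c, ('X^2 - 1) * (c - b) + a)
  end.

Definition Qk (k : nat) : {poly int} := (qtrip k).1.1.

(* q_n for odd n <= -1: n = -(2k+1), k = (|n| - 1)/2. *)
Definition q (n : int) : {poly int} := Qk (`|n|%N.-1)./2.

From HB Require Import structures.
From mathcomp Require Import all_boot all_order all_algebra.
From mathcomp Require Import ring zify.
Import Order.TTheory GRing.Theory Num.Theory.
Set Implicit Arguments. Unset Strict Implicit. Unset Printing Implicit Defensive.
Local Open Scope ring_scope.

(* Write Q_k = q_{-(2k+1)}.  The recurrence acts on windows (Q_k, Q_{k+1}, Q_{k+2}),
   and an additive map intertwining multiplication by w with an operator m carries
   it to the same recurrence driven by m (map3_iter_qstep).  Two such maps are used.
   - Evaluation at x = 1 or x = -1: as x^2 = 1 the window merely rotates, so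
     Q_k(1) and Q_k(-1) only depend on k mod 3.  Since f(-1) is even while
     Q_k(-1) = -11 unless k = 1 (mod 3), only that case remains, and there
     f(1) | -4 and f(-1) | -8 leave finitely many "admissible" pairs (a, b).
   - Reduction modulo f, in the coordinates (1, w) given by the companion matrix:
     f | Q_k forces the reduction of Q_k to vanish.  For f = w^2 + 2w - 7 a
     doubling invariant shows that it never does; for every other admissible f
     it is nonzero already modulo 16, checked by computing one period (24 steps)
     of the orbit. *)

Section Window.
Variable V : zmodType.

Definition qstep (m : V -> V) (t : V * V * V) : V * V * V :=
  let: (A, B, C) := t in (B, C, m (m (C - B)) - (C - B) + A).

Lemma qstep_rotate (m : V -> V) (A B C : V) :
  involutive m -> qstep m (A, B, C) = (B, C, A).
Proof. by move=> mK; rewrite /qstep mK subrr add0r. Qed.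

Lemma iter3_qstep_id (m : V -> V) (t : V * V * V) :
  involutive m -> iter 3 (qstep m) t = t.
Proof.
move=> mK; case: t => [[A B] C].
by rewrite -[iter 3 _ _]/(qstep m (qstep m (qstep m (A, B, C)))) !qstep_rotate.
Qed.

End Window.

Definition map3 (U V : Type) (phi : U -> V) (t : U * U * U) : V * V * V :=
  let: (A, B, C) := t in (phi A, phi B, phi C).

Lemma map3_11 (U V : Type) (phi : U -> V) (t : U * U * U) :
  (map3 phi t).1.1 = phi t.1.1.
Proof. by case: t => [[A B] C]. Qed.

Section Transport.
Variables (U V : zmodType) (phi : U -> V).
Hypothesis phiB : zmod_morphism phi.

Let phiD : {morph phi : x y / x + y}.
Proof.
have phi0 : phi 0 = 0 by rewrite -(subrr 0) phiB subrr.
have phiN y : phi (- y) = - phi y by rewrite -sub0r phiB phi0 sub0r.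
by move=> x y; rewrite -[y in LHS]opprK phiB phiN opprK.
Qed.

Lemma map3_iter_qstep (m : U -> U) (m' : V -> V) :
  (forall x, phi (m x) = m' (phi x)) ->
  forall k t, map3 phi (iter k (qstep m) t) = iter k (qstep m') (map3 phi t).
Proof.
move=> phim; elim=> [|k IH] t //=; rewrite -IH.
by case: (iter k _ t) => [[A B] C]; rewrite /= phiD phiB !phim phiB.
Qed.

End Transport.

Lemma iter_mod_period (T : Type) (F : T -> T) (x : T) (P k : nat) :
  iter P F x = x -> iter k F x = iter (k %% P) F x.
Proof.
move=> hP; rewrite {1}(divn_eq k P) addnC iterD; congr (iter _ F _).
by elim: (k %/ P)%N => [|j IH] //; rewrite mulSn iterD IH hP.
Qed.

Definition qbase : {poly int} * {poly int} * {poly int} := (q_m1, q_m3, q_m5).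

Lemma qtrip_iter (k : nat) : qtrip k = iter k (qstep ( *%R 'X)) qbase.
Proof.
elim: k => [|k IH] //=; rewrite -IH.
by case: (qtrip k) => [[A B] C] /=; rewrite mulrA -expr2 mulrBl mul1r.
Qed.

Lemma Qk_iter (k : nat) : Qk k = (iter k (qstep ( *%R 'X)) qbase).1.1.
Proof. by rewrite /Qk qtrip_iter. Qed.

Lemma Qk_eval_period (x : int) (k : nat) :
  x ^+ 2 = 1 -> (Qk k).[x] = (Qk (k %% 3)).[x].
Proof.
move=> x2; have mK : involutive ( *%R x) by move=> y; rewrite mulrA -expr2 x2 mul1r.
have evalB : zmod_morphism (horner^~ x) by move=> p q; rewrite hornerD hornerN.
have evalX p : ('X * p).[x] = x * p.[x] by rewrite hornerM hornerX.
have ev j : (Qk j).[x] = (iter j (qstep ( *%R x)) (map3 (horner^~ x) qbase)).1.1.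
  by rewrite Qk_iter -(map3_11 (horner^~ x)) (map3_iter_qstep evalB evalX).
by rewrite !ev (iter_mod_period k (iter3_qstep_id _ mK)).
Qed.

Lemma Qk_at_1 (k : nat) : (Qk k).[1] = [:: -5; -4; -5]`_(k %% 3).
Proof.
rewrite Qk_eval_period ?expr1n //.
have : (k %% 3 < 3)%N by rewrite ltn_pmod.
by case: (k %% 3)%N => [|[|[|//]]] _; rewrite /Qk /= /q_m1 /q_m3 /q_m5 !hornerE.
Qed.

Lemma Qk_at_m1 (k : nat) : (Qk k).[-1] = [:: -11; -8; -11]`_(k %% 3).
Proof.
rewrite Qk_eval_period ?sqrrN ?expr1n //.
have : (k %% 3 < 3)%N by rewrite ltn_pmod.
by case: (k %% 3)%N => [|[|[|//]]] _; rewrite /Qk /= /q_m1 /q_m3 /q_m5 !hornerE.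
Qed.

Section Reduction.
Variable R : comNzRingType.
Variables a b : R.

(* Multiplication by w in R[w]/(w^2 + a w + b), in coordinates for the basis (1, w). *)
Definition mulw (r : R * R) : R * R := (- b * r.2, r.1 - a * r.2).

Definition companion : 'M[R]_2 :=
  \matrix_(i, j) if i == 0 then (j == 1)%:R else if j == 0 then - b else - a.

(* Coordinates of p mod (w^2 + a w + b): the first row of p(companion). *)
Definition red (p : {poly R}) : R * R :=
  let P := horner_mx companion p in (P 0 0, P 0 1).

Lemma mulmx2E (A B : 'M[R]_2) i j : (A *m B) i j = A i 0 * B 0 j + A i 1 * B 1 j.
Proof.
rewrite mxE !big_ord_recl big_ord0 addr0.
by congr (A i _ * B _ j + A i _ * B _ j); apply: val_inj.
Qed.

Lemma red_is_zmod_morphism : zmod_morphism red.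
Proof. by rewrite /zmod_morphism => p q; rewrite /red rmorphB !mxE. Qed.

Lemma redD : {morph red : p q / p + q}.
Proof. by move=> p q; rewrite /red rmorphD !mxE. Qed.

Lemma redC (c : R) : red c%:P = (c, 0).
Proof. by rewrite /red horner_mx_C !mxE. Qed.

Lemma redX (p : {poly R}) : red ('X * p) = mulw (red p).
Proof.
rewrite /red /mulw mulrC rmorphM /= horner_mx_X -mulmxE !mulmx2E !mxE /=.
by congr pair; ring.
Qed.

(* Cayley-Hamilton for the companion matrix: multiples of w^2 + a w + b reduce to 0. *)
Lemma red_multiple (g : {poly R}) : red (('X^2 + a%:P * 'X + b%:P) * g) = 0.
Proof.
have CH : horner_mx companion ('X^2 + a%:P * 'X + b%:P) = 0.
  rewrite !rmorphD !rmorphM /= horner_mx_X !horner_mx_C -!mulmxE.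
  apply/matrixP => i j; rewrite !mxE !big_ord_recl !big_ord0 !mxE.
  by case: i => [[|[|//]] ?]; case: j => [[|[|//]] ?] /=; ring.
by rewrite /red /= rmorphM /= CH mul0r !mxE.
Qed.

Definition redseq (s : seq R) : R * R := foldr (fun c r => mulw r + (c, 0)) 0 s.

Lemma red_Poly (s : seq R) : red (Poly s) = redseq s.
Proof.
elim: s => [|c s IH] /=; first by rewrite redC.
by rewrite cons_poly_def mulrC redD redX IH redC.
Qed.
End Reduction.

Definition qbase_coeffs : seq int * seq int * seq int :=
  ([:: -7; 2; -1; 1], [:: -9; 3; 5; -2; -2; 1], [:: -7; 2; -7; 4; 8; -4; -2; 1]).

Lemma qbase_Poly : qbase = map3 Poly qbase_coeffs.
Proof. by rewrite /qbase /q_m1 /q_m3 /q_m5 /= !cons_poly_def; congr (_, _, _); ring. Qed.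

Definition rbase (a b : int) : (int * int) * (int * int) * (int * int) :=
  map3 (redseq a b) qbase_coeffs.

Lemma red_Qk (a b : int) (k : nat) :
  red a b (Qk k) = (iter k (qstep (mulw a b)) (rbase a b)).1.1.
Proof.
rewrite Qk_iter -(map3_11 (red a b)).
rewrite (map3_iter_qstep (red_is_zmod_morphism a b) (@redX _ a b)).
by rewrite qbase_Poly /rbase; case: qbase_coeffs => [[s1 s3] s5] /=; rewrite !red_Poly.
Qed.

(* For f = w^2 + 2w - 7 the reduction of Q_k never vanishes: along the orbit the
   second coordinate y and the gap y - x of the reduced window at least double. *)
Definition doubling (t : (int * int) * (int * int) * (int * int)) : Prop :=
  let: ((x0, y0), (x1, y1), (x2, y2)) := t in
  (0 < y0 - x0 /\ 0 <= y0) /\ (2 * (y0 - x0) <= y1 - x1 /\ 2 * y0 <= y1)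
  /\ (2 * (y1 - x1) <= y2 - x2 /\ 2 * y1 <= y2).

Lemma doubling_qstep (t : (int * int) * (int * int) * (int * int)) :
  doubling t -> doubling (qstep (mulw 2 (-7)) t).
Proof. by case: t => [[[x0 y0] [x1 y1]] [x2 y2]] /=; lia. Qed.

Lemma red_Qk_2_m7 (k : nat) : red 2 (-7) (Qk k) != 0.
Proof.
have inv : doubling (iter k (qstep (mulw 2 (-7))) (rbase 2 (-7))).
  by elim: k => [|k IH]; [rewrite /=; lia | exact: doubling_qstep].
rewrite red_Qk; move: inv.
by case: (iter _ _ _) => [[[x0 y0] [x1 y1]] [x2 y2]] /= ?; apply/eqP => -[? ?]; lia.
Qed.

Section IntegerCoordinates.
Variable S : comNzRingType.

Definition intr2 (r : int * int) : S * S := (r.1%:~R, r.2%:~R).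

Lemma intr2_is_zmod_morphism : zmod_morphism intr2.
Proof. by move=> r s; rewrite /intr2 /= !intrB. Qed.

Lemma intr2_mulw (a b : int) (r : int * int) :
  intr2 (mulw a b r) = mulw a%:~R b%:~R (intr2 r).
Proof. by rewrite /intr2 /mulw /= intrB !intrM intrN. Qed.

Lemma intr2_redseq (a b : int) (s : seq int) :
  intr2 (redseq a b s) = redseq a%:~R b%:~R (map intr s).
Proof. by elim: s => [|c s IH] //=; rewrite -IH -intr2_mulw /intr2 /= !intrD. Qed.

End IntegerCoordinates.

(* The reduced base window read modulo 16; the coefficients are reduced first
   so that the computation stays small. *)
Definition start16 (a b : int) : ('Z_16 * 'Z_16) * ('Z_16 * 'Z_16) * ('Z_16 * 'Z_16) :=
  map3 (redseq a%:~R b%:~R \o map intr) qbase_coeffs.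

Lemma start16E (a b : int) : start16 a b = map3 (intr2 'Z_16) (rbase a b).
Proof.
rewrite /start16 /rbase.
by case: qbase_coeffs => [[s1 s3] s5] /=; rewrite !intr2_redseq.
Qed.

Definition step16 (a b : int) : _ -> _ := qstep (mulw (a%:~R : 'Z_16) b%:~R).

(* A finite certificate that Q_k mod (16, w^2 + a w + b) is nonzero whenever
   k = 1 (mod 3): the orbit has period 24, and is nonzero at the steps 3j + 1. *)
Definition certificate16 (a b : int) : bool :=
  (iter 24 (step16 a b) (start16 a b) == start16 a b) &&
  all (fun j => (iter (3 * j).+1 (step16 a b) (start16 a b)).1.1 != 0) (iota 0 8).

Lemma certificate16_sound (a b : int) (k : nat) :
  certificate16 a b -> (k %% 3 = 1)%N -> red a b (Qk k) != 0.
Proof.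
case/andP => /eqP period /allP nonzero k1.
apply: contraNneq (nonzero (k %% 24 %/ 3)%N _) => [red0|]; last first.
  by rewrite mem_iota add0n ltn_divLR ?ltn_pmod.
have k24 : (k %% 24 = (3 * (k %% 24 %/ 3)).+1)%N.
  have := modn_dvdm k (isT : (3 %| 24)%N); rewrite k1 => mod3.
  by rewrite {1}(divn_eq (k %% 24) 3) mod3 addn1 mulnC.
rewrite -k24 -(iter_mod_period k period) start16E.
rewrite -(map3_iter_qstep (@intr2_is_zmod_morphism _) (@intr2_mulw _ a b)).
by rewrite map3_11 -red_Qk red0.
Qed.

(* Quadratics w^2 + a w + b that can divide Q_k when k = 1 (mod 3): a is even,
   b is odd, f(1) = 1 + a + b divides Q_k(1) = -4 and f(-1) = 1 - a + b divides
   Q_k(-1) = -8. *)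
Definition admissible (a b : int) : bool :=
  [&& (2 %| a)%Z, ~~ (2 %| b)%Z, (1 + a + b %| -4)%Z & (1 - a + b %| -8)%Z].

Definition int_range (lo hi : nat) : seq int :=
  [seq i%:Z - lo%:Z | i <- iota 0 (lo + hi).+1].

Lemma mem_int_range (lo hi : nat) (z : int) :
  - lo%:Z <= z <= hi%:Z -> z \in int_range lo hi.
Proof.
move=> zb; apply/mapP; exists (absz (z + lo%:Z)); last by lia.
by rewrite mem_iota; lia.
Qed.

Definition candidates : seq (int * int) :=
  [seq (a, b) | a <- int_range 6 6, b <- int_range 7 5].

Lemma admissible_candidate (a b : int) : admissible a b -> (a, b) \in candidates.
Proof.
case/and4P => _ _ d1 d2.
have /dvdn_leq b1 : (absz (1 + a + b)%R %| 4)%N by rewrite dvdzE in d1.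
have /dvdn_leq b2 : (absz (1 - a + b)%R %| 8)%N by rewrite dvdzE in d2.
by apply: allpairs_f; apply: mem_int_range; move: (b1 isT) (b2 isT); lia.
Qed.

Lemma certificates_checked :
  all (fun ab => admissible ab.1 ab.2 ==> (ab == (2, -7)) || certificate16 ab.1 ab.2)
    candidates.
Proof. by vm_compute. Qed.

Lemma red_Qk_neq0 (a b : int) (k : nat) :
  admissible a b -> (k %% 3 = 1)%N -> red a b (Qk k) != 0.
Proof.
move=> adm k1.
have [[-> ->]|ab_neq] := eqVneq (a, b) (2, -7); first exact: red_Qk_2_m7.
have /allP/(_ _ (admissible_candidate adm)) := certificates_checked.
by rewrite /= adm (negPf ab_neq) => /certificate16_sound; apply.
Qed.

Lemma monic_quadratic_mod2 (f : {poly int}) :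
  f \is monic -> size f = 3%N -> (forall i, (2 %| (f - ('X + 1) ^+ 2)`_i)%Z) ->
  [/\ f = 'X^2 + (f`_1)%:P * 'X + (f`_0)%:P, (2 %| f`_1)%Z & ~~ (2 %| f`_0)%Z].
Proof.
move=> fmonic fsize fmod2; split.
- apply/polyP => i; rewrite !coefE.
  have f2 : f`_2 = 1 by move: fmonic; rewrite monicE /lead_coef fsize => /eqP.
  case: i => [|[|[|i]]] /=; rewrite ?mulr0 ?mulr1 ?addr0 ?add0r //.
  by rewrite nth_default // fsize.
- by have := fmod2 1%N; rewrite sqrrD1 !coefE /=; lia.
- by have := fmod2 0%N; rewrite sqrrD1 !coefE /=; lia.
Qed.

Theorem lemma4p4 (n : int) (hn : n <= -1) (hodd : odd `|n|%N)
  (f : {poly int}) (hmonic : f \is monic) (hdeg : size f = 3%N)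
  (hmod2 : forall i : nat, (2 %| (f - ('X + 1) ^+ 2)`_i)%Z) :
  ~ (exists g : {poly int}, q n = f * g).
Proof.
case=> g; rewrite /q; set k := (`|n|%N.-1)./2 => Qfg.
have [fE a_even b_odd] := monic_quadratic_mod2 hmonic hdeg hmod2.
set a := f`_1 in fE a_even; set b := f`_0 in fE b_odd.
have dvd_at x : (f.[x] %| (Qk k).[x])%Z by rewrite Qfg hornerM dvdz_mulr.
have f1 : f.[1] = 1 + a + b by rewrite fE !hornerE; lia.
have fm1 : f.[-1] = 1 - a + b by rewrite fE !hornerE; lia.
have even_fm1 : (2 %| f.[-1])%Z by rewrite fm1; lia.
have [k1|k_not1] := eqVneq (k %% 3)%N 1%N; last first.
  have Qm1 : (Qk k).[-1] = -11.
    have : (k %% 3 < 3)%N by rewrite ltn_pmod.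
    by rewrite Qk_at_m1; move: k_not1; case: (k %% 3)%N => [|[|[|]]].
  by have := dvdz_trans even_fm1 (dvd_at (-1)); rewrite Qm1.
have adm : admissible a b.
  apply/and4P; split=> //; rewrite -?f1 -?fm1.
  - by have := dvd_at 1; rewrite Qk_at_1 k1.
  - by have := dvd_at (-1); rewrite Qk_at_m1 k1.
have /eqP := red_Qk_neq0 adm k1; apply.
by rewrite Qfg fE red_multiple.
Qed.
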